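(* For every $N\ge 1$, $$\mathbb{E}[\mathcal{R}_2(N)]=H_{N-1},\qquad \mathbb{E}[\mathcal{R}_2(N)^2]=H_{N-1}^2+H_{N-1}-H_{N-1}^{(2)},\qquad \operatorname{Var}[\mathcal{R}_2(N)]=H_{N-1}-H_{N-1}^{(2)},$$ where $H_n=\sum_{i=1}^n 1/i$ and $H_n^{(2)}=\sum_{i=1}^n 1/i^2$ (with $H_0=H_0^{(2)}=0$).
   Context: A random recursive hypergraph (RRH) is the random hypergraph process defined as follows. At size $N=1$ it has vertex set $\{v_1\}$ and edge set $\{\{v_1\}\}$. Given the hypergraph of size $N$ (vertices $v_1,\dots,v_N$, exactly $N$ edges), one chooses an existing edge $e$ uniformly at random, independently of the past, and adds a new vertex $v_{N+1}$ together with the new edge $e\cup\{v_{N+1}\}$. The rank of a vertex $v$ is $\min\{|e| : v\in e\}$. $\mathcal{R}_k(N)$ denotes the number of vertices of rank $k$ in the RRH of size $N$ (equivalently, the number of edges of size $k$). *)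

From mathcomp Require Import all_boot all_order all_algebra.
Set Implicit Arguments. Unset Strict Implicit. Unset Printing Implicit Defensive.
Import Order.TTheory GRing.Theory Num.Theory.
Local Open Scope ring_scope.

(* A hypergraph of size N: vertices v_1..v_N are encoded as 0..N-1,
   edges are listed (in order of creation) as sequences of vertices. *)
Definition hgraph := seq (seq nat).

Definition rrh_init : hgraph := [:: [:: 0%N]].

(* One step: choose edge number c, add new vertex (numbered size E, as there
   are exactly as many vertices as edges) and new edge e_c ∪ {new vertex}. *)
Definition rrh_step (E : hgraph) (c : nat) : hgraph :=
  rcons E (rcons (nth [::] E c) (size E)).

Fixpoint rrh_expect (R : fieldType) (n : nat) (E : hgraph) (f : hgraph -> R) : R :=
  match n with
  | 0%N => f E
  | n'.+1 => (size E)%:R^-1 * \sum_(c < size E) rrh_expect n' (rrh_step E c) f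
  end.

Definition E_RRH (R : fieldType) (N : nat) (f : hgraph -> R) : R :=
  rrh_expect N.-1 rrh_init f.

Definition Var_RRH (R : fieldType) (N : nat) (f : hgraph -> R) : R :=
  E_RRH N (fun E => (f E - E_RRH N f) ^+ 2).

Definition vrank (E : hgraph) (v : nat) : nat :=
  foldr minn (size (flatten E)).+1 [seq size e | e <- E & v \in e].

Definition Rk (k : nat) (E : hgraph) : nat :=
  count (fun v => vrank E v == k) (iota 0 (size E)).

Definition Hn (R : fieldType) (n : nat) : R := \sum_(1 <= i < n.+1) (i%:R)^-1.
Definition Hn2 (R : fieldType) (n : nat) : R := \sum_(1 <= i < n.+1) (i%:R ^+ 2)^-1.

From mathcomp Require Import all_boot all_order all_algebra.
From mathcomp Require Import ring.
Set Implicit Arguments. Unset Strict Implicit. Unset Printing Implicit Defensive.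
Import GRing.Theory Num.Theory.
Local Open Scope ring_scope.

(* Edge number [v] is the edge created together with vertex [v], and it is the
   smallest edge containing [v]; the only singleton edge is the first one.
   Hence [R_2] grows by one exactly when the first edge is chosen, which at
   size [N] happens with probability [1/N]: [R_2(N)] is a sum of independent
   Bernoulli([1/k]) variables, [k = 1 .. N-1], whence mean [H_{N-1}] and
   variance [sum (1/k - 1/k^2)].  The proof runs this as an exact recursion on
   conditional moments given the current hypergraph. *)

Definition rrh_wf (E : hgraph) := [/\ (0 < size E)%N,
  forall e, e \in E -> forall x, x \in e -> (x < size E)%N,
  forall v, (v < size E)%N -> v \in nth [::] E v /\
     (forall e, e \in E -> v \in e -> (size (nth [::] E v) <= size e)%N)
  & forall c, (c < size E)%N -> (size (nth [::] E c) == 1%N) = (c == 0%N)].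

Lemma rrh_wf_init : rrh_wf rrh_init.
Proof.
split => //.
- by move=> e; rewrite inE => /eqP -> x; rewrite inE => /eqP ->.
- by case=> // _; split => // e; rewrite inE => /eqP ->.
- by case.
Qed.

Lemma size_rrh_step E c : size (rrh_step E c) = (size E).+1.
Proof. exact: size_rcons. Qed.

Lemma rrh_wf_step E c : rrh_wf E -> (c < size E)%N -> rrh_wf (rrh_step E c).
Proof.
case=> E_gt0 E_bound E_own E_single c_lt; rewrite /rrh_wf size_rrh_step /rrh_step.
have c_in : c \in nth [::] E c by case: (E_own c c_lt).
have ec_in : nth [::] E c \in E by apply: mem_nth.
split => //.
- move=> e; rewrite mem_rcons inE => /orP [/eqP -> | e_in] x.
    rewrite mem_rcons inE => /orP [/eqP -> // | x_in].
    by apply: ltnW; rewrite ltnS; apply: E_bound ec_in x x_in.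
  by move=> x_in; apply: ltnW; rewrite ltnS; apply: E_bound e_in x x_in.
- move=> v; rewrite ltnS leq_eqVlt => /orP [/eqP -> | v_lt].
    rewrite nth_rcons ltnn eqxx mem_rcons in_cons eqxx; split => // e.
    rewrite mem_rcons inE => /orP [/eqP -> // | e_in] new_in.
    by have := E_bound e e_in _ new_in; rewrite ltnn.
  rewrite nth_rcons v_lt; case: (E_own v v_lt) => v_in v_min; split => // e.
  rewrite mem_rcons inE => /orP [/eqP -> | e_in] v_e; last exact: v_min.
  move: v_e; rewrite mem_rcons inE => /orP [/eqP v_new | v_ec].
    by move: v_lt; rewrite v_new ltnn.
  by rewrite size_rcons; apply: leq_trans (v_min _ ec_in v_ec) _.
- move=> c'; rewrite ltnS leq_eqVlt => /orP [/eqP -> | c'_lt].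
    rewrite nth_rcons ltnn eqxx size_rcons eqSS.
    have -> : (size (nth [::] E c) == 0%N) = false.
      by apply/negbTE/eqP => ec0; move: c_in; rewrite (size0nil ec0).
    by case: (size E) E_gt0.
  by rewrite nth_rcons c'_lt; apply: E_single.
Qed.

Lemma foldr_minn_le (s : seq nat) d y : y \in s -> (foldr minn d s <= y)%N.
Proof.
elim: s => // a s IH; rewrite inE => /orP [/eqP -> | y_in] /=; first exact: geq_minl.
exact: leq_trans (geq_minr _ _) (IH y_in).
Qed.

Lemma foldr_minn_ge (s : seq nat) d x : (forall y, y \in s -> (x <= y)%N) ->
  (x <= d)%N -> (x <= foldr minn d s)%N.
Proof.
elim: s => //= a s IH x_le x_d; rewrite leq_min x_le ?inE ?eqxx // IH // => y y_in.
by apply: x_le; rewrite inE y_in orbT.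
Qed.

Lemma size_nth_flatten (T : Type) (s : seq (seq T)) i :
  (size (nth [::] s i) <= size (flatten s))%N.
Proof.
elim: s i => [|e s IH] [|i] //=; rewrite size_cat ?leq_addr //.
exact: leq_trans (IH i) (leq_addl _ _).
Qed.

Lemma vrank_rrh E v : rrh_wf E -> (v < size E)%N -> vrank E v = size (nth [::] E v).
Proof.
case=> _ _ E_own _ v_lt; case: (E_own v v_lt) => v_in v_min; rewrite /vrank.
apply/eqP; rewrite eqn_leq; apply/andP; split.
  apply: foldr_minn_le; apply/mapP; exists (nth [::] E v) => //.
  by rewrite mem_filter v_in mem_nth.
apply: foldr_minn_ge; last exact: leq_trans (size_nth_flatten E v) (leqnSn _).
by move=> y /mapP [e]; rewrite mem_filter => /andP [v_e e_in] ->; apply: v_min.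
Qed.

Lemma Rk_rrh k E : rrh_wf E ->
  Rk k E = count (fun v => size (nth [::] E v) == k) (iota 0 (size E)).
Proof.
move=> wfE; apply: eq_in_count => v; rewrite mem_iota add0n => v_lt.
by rewrite vrank_rrh.
Qed.

Lemma Rk2_rrh_step E c : rrh_wf E -> (c < size E)%N ->
  Rk 2 (rrh_step E c) = (Rk 2 E + (c == 0%N))%N.
Proof.
move=> wfE c_lt; rewrite (Rk_rrh 2 (rrh_wf_step wfE c_lt)) (Rk_rrh 2 wfE).
rewrite size_rrh_step -[(size E).+1]addn1 iotaD count_cat add0n /= /rrh_step.
rewrite nth_rcons ltnn eqxx size_rcons eqSS.
case: wfE => _ _ _ E_single; rewrite E_single // addn0; congr addn.
by apply: eq_in_count => v; rewrite mem_iota /= => v_lt; rewrite nth_rcons v_lt.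
Qed.

Lemma eq_rrh_expect (R : fieldType) n E (f g : hgraph -> R) : f =1 g ->
  rrh_expect n E f = rrh_expect n E g.
Proof.
move=> fg; elim: n E => [|n IH] E /=; first exact: fg.
by congr (_ * _); apply: eq_bigr => c _; apply: IH.
Qed.

Section ConditionalMoments.

Variable R : numFieldType.

Lemma rrh_expectS_Rk2 n (f : hgraph -> R) (g : nat -> nat -> R) :
  (forall E, rrh_wf E -> rrh_expect n E f = g (size E) (Rk 2 E)) ->
  forall E, rrh_wf E -> rrh_expect n.+1 E f =
    (size E)%:R^-1 * (g (size E).+1 (Rk 2 E).+1 + g (size E).+1 (Rk 2 E) *+ (size E).-1).
Proof.
move=> expect_n E wfE /=; congr (_ * _).
have E_gt0 : (0 < size E)%N by case: wfE.
rewrite (eq_bigr (fun c : 'I_(size E) => g (size E).+1 (Rk 2 E + (c == 0%N :> nat))%N));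
  last by move=> c _; rewrite expect_n ?size_rrh_step ?Rk2_rrh_step //; apply: rrh_wf_step.
move: E_gt0; case: (size E) => // m _.
rewrite big_ord_recl /= addn1 addn0; congr (_ + _).
by rewrite sumr_const card_ord.
Qed.

Definition harm_tail m n : R := \sum_(m <= i < m + n) (i%:R)^-1.
Definition harm2_tail m n : R := \sum_(m <= i < m + n) (i%:R ^+ 2)^-1.

Lemma harm_tail0 m : harm_tail m 0 = 0.
Proof. by rewrite /harm_tail addn0 big_geq. Qed.

Lemma harm2_tail0 m : harm2_tail m 0 = 0.
Proof. by rewrite /harm2_tail addn0 big_geq. Qed.

Lemma harm_tailS m n : harm_tail m n.+1 = (m%:R)^-1 + harm_tail m.+1 n.
Proof. by rewrite /harm_tail big_ltn ?addnS ?addSn // ltnS leq_addr. Qed.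

Lemma harm2_tailS m n : harm2_tail m n.+1 = (m%:R ^+ 2)^-1 + harm2_tail m.+1 n.
Proof. by rewrite /harm2_tail big_ltn ?addnS ?addSn // ltnS leq_addr. Qed.

Lemma harm_tail1 n : harm_tail 1 n = Hn R n.
Proof. by rewrite /harm_tail /Hn add1n. Qed.

Lemma harm2_tail1 n : harm2_tail 1 n = Hn2 R n.
Proof. by rewrite /harm2_tail /Hn2 add1n. Qed.

Lemma rrh_expect_Rk2 n E : rrh_wf E ->
  rrh_expect n E (fun E => (Rk 2 E)%:R : R) = (Rk 2 E)%:R + harm_tail (size E) n.
Proof.
elim: n E => [|n IH] E wfE; first by rewrite /= harm_tail0 addr0.
rewrite (rrh_expectS_Rk2 (g := fun s k => k%:R + harm_tail s n) IH wfE) harm_tailS.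
case: wfE; case: (size E) => // m _ _ _ _ /=.
rewrite -(mulr_natr _ m) -natr1.
have m1_neq0 : m%:R + 1 != 0 :> R by rewrite natr1 pnatr_eq0.
by field.
Qed.

Lemma rrh_expect_Rk2_sq (a : R) n E : rrh_wf E ->
  rrh_expect n E (fun E => ((Rk 2 E)%:R - a) ^+ 2) =
  ((Rk 2 E)%:R + harm_tail (size E) n - a) ^+ 2
    + harm_tail (size E) n - harm2_tail (size E) n.
Proof.
elim: n E => [|n IH] E wfE; first by rewrite /= harm_tail0 harm2_tail0 !addr0 subr0.
rewrite (rrh_expectS_Rk2
  (g := fun s k => (k%:R + harm_tail s n - a) ^+ 2 + harm_tail s n - harm2_tail s n)
  IH wfE) harm_tailS harm2_tailS.
case: wfE; case: (size E) => // m _ _ _ _ /=.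
rewrite -(mulr_natr _ m) -natr1.
have m1_neq0 : m%:R + 1 != 0 :> R by rewrite natr1 pnatr_eq0.
by field.
Qed.

End ConditionalMoments.

Theorem mainTheorem8 (R : realFieldType) (N : nat) : (1 <= N)%N ->
  [/\ E_RRH N (fun E => (Rk 2 E)%:R) = Hn R N.-1,
      E_RRH N (fun E => ((Rk 2 E)%:R) ^+ 2) = Hn R N.-1 ^+ 2 + Hn R N.-1 - Hn2 R N.-1
    & Var_RRH N (fun E => (Rk 2 E)%:R) = Hn R N.-1 - Hn2 R N.-1].
Proof.
(* [N = 0] needs no exclusion: it behaves as [N = 1] since [N.-1 = 0]. *)
move=> _; have Rk2_init : Rk 2 rrh_init = 0%N by [].
have wf_init := rrh_wf_init.
have mean : E_RRH N (fun E => (Rk 2 E)%:R) = Hn R N.-1.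
  by rewrite /E_RRH rrh_expect_Rk2 // Rk2_init add0r harm_tail1.
have moment_sq a : E_RRH N (fun E => ((Rk 2 E)%:R - a) ^+ 2) =
    (Hn R N.-1 - a) ^+ 2 + Hn R N.-1 - Hn2 R N.-1.
  by rewrite /E_RRH rrh_expect_Rk2_sq // Rk2_init add0r harm_tail1 harm2_tail1.
split => //.
- have := moment_sq 0; rewrite [Hn R N.-1 - 0]subr0 => <-.
  by apply: eq_rrh_expect => E; rewrite subr0.
- by rewrite /Var_RRH mean moment_sq subrr expr0n add0r.
Qed.
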